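(* Let $F:(0,\infty)\times(0,\infty)\to\mathbb{R}$ satisfy Assumption (P) below, let $G$ be the function in (P)(ii), and let $f>0$. (i) Fix $\alpha>0$ and $\beta>0$. If $G(\beta)/\alpha<1/(1+f)$, then the system $$\frac{1-d^A}{1-d^B}=\frac{1}{\beta}G^{-1}\big(\alpha/(1+f)\big),\qquad F\big(\beta(1-d^A),1-d^B\big)=F(\beta,1)$$ admits a unique solution $(d^A,d^B)$ with $d^A\in(0,1)$ and $d^B<0$. If $G(\beta)/\alpha>1+f$, then the system $$\frac{1-d^A}{1-d^B}=\frac{1}{\beta}G^{-1}\big(\alpha(1+f)\big),\qquad F\big(\beta(1-d^A),1-d^B\big)=F(\beta,1)$$ admits a unique solution $(d^A,d^B)$ with $d^A<0$ and $d^B\in(0,1)$. Denote by $(\varphi^A(\alpha,\beta),\varphi^B(\alpha,\beta))$ the solution in these two cases, and set $(\varphi^A(\alpha,\beta),\varphi^B(\alpha,\beta))=(0,0)$ when $G(\beta)/\alpha\in[1/(1+f),1+f]$. Then for $i\in\{A,B\}$, $\varphi^i$ is continuous on $(0,\infty)\times(0,\infty)$ and equals $0$ on the region $\{G(\beta)/\alpha\in[1/(1+f),1+f]\}$; moreover, on the region $\{G(\beta)/\alpha\notin[1/(1+f),1+f]\}$, $\varphi^A(\alpha,\beta)$ is strictly increasing and $\varphi^B(\alpha,\beta)$ is strictly decreasing in each of $\alpha$ and $\beta$. (ii) For any $y^A>0$, $y^B>0$, $a>0$, $b>0$, the optimization problem $$\max_{D^A,D^B}\; a(1+f\mathbf 1_{D^A<0})D^A+b(1+f\mathbf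 1_{D^B<0})D^B$$ subject to $F(y^A,y^B)=F(y^A-D^A,y^B-D^B)$, $y^A-D^A>0$, $y^B-D^B>0$, admits a unique solution $(\hat D^A,\hat D^B)$, given by $\hat D^i=\varphi^i(a/b,\,y^A/y^B)\,y^i$ for $i\in\{A,B\}$.
   Context: Assumption (P) on the pricing function $F:(0,\infty)\times(0,\infty)\to\mathbb{R}$: (i) $F$ is continuously differentiable with partial derivatives $F_x(x,y)>0$ and $F_y(x,y)>0$ for all $x,y>0$; (ii) $F_x(x,y)/F_y(x,y)=G(x/y)$ for some continuously differentiable function $G:(0,\infty)\to(0,\infty)$ with $G'(z)<0$ for all $z>0$, $\lim_{z\downarrow0}G(z)=\infty$ and $\lim_{z\uparrow\infty}G(z)=0$; (iii) if $F(x,y)=F(x',y')$ then $F(cx,cy)=F(cx',cy')$ for every $c>0$. $G^{-1}$ denotes the inverse function of $G$. The constant $f>0$ is the unit trading fee; in the optimization problem, $y^A,y^B$ are the pool deposits of assets $A,B$, $D^i$ is the amount of asset $i$ withdrawn from the pool by the trader (negative means deposited), and $a,b$ are the trader's valuations of the assets. *)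

From Stdlib Require Import Reals ClassicalEpsilon.
From Coquelicot Require Import Coquelicot.
Open Scope R_scope.

(* Assumption (P) on the pricing function F, with G the function of (P)(ii).
   Only the values of F on (0,oo)^2 and of G on (0,oo) matter. *)
Definition AssumptionP (F : R -> R -> R) (G : R -> R) : Prop :=
  (exists Fx Fy : R -> R -> R,
     forall x y, 0 < x -> 0 < y ->
       is_derive (fun u => F u y) x (Fx x y) /\
       is_derive (fun v => F x v) y (Fy x y) /\
       continuous (fun p : R * R => Fx (fst p) (snd p)) (x, y) /\
       continuous (fun p : R * R => Fy (fst p) (snd p)) (x, y) /\
       0 < Fx x y /\ 0 < Fy x y /\
       Fx x y / Fy x y = G (x / y)) /\
  (exists G' : R -> R,
     forall z, 0 < z ->
       0 < G z /\ is_derive G z (G' z) /\ continuous G' z /\ G' z < 0) /\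
  filterlim G (at_right 0) (Rbar_locally p_infty) /\
  is_lim G p_infty 0 /\
  (forall x y x' y', 0 < x -> 0 < y -> 0 < x' -> 0 < y' ->
     F x y = F x' y' -> forall c, 0 < c -> F (c * x) (c * y) = F (c * x') (c * y')).

(* G^{-1} : the (unique, under (P)) z > 0 with G z = v. *)
Definition Ginv (G : R -> R) (v : R) : R :=
  epsilon (inhabits 1) (fun z => 0 < z /\ G z = v).

(* The system of (i) with ratio parameter v (v = alpha/(1+f) or alpha(1+f)). *)
Definition phi_system (F : R -> R -> R) (G : R -> R) (v beta dA dB : R) : Prop :=
  (1 - dA) / (1 - dB) = / beta * Ginv G v /\
  F (beta * (1 - dA)) (1 - dB) = F beta 1.

Definition sol_case1 F G (f alpha beta : R) (d : R * R) : Prop :=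
  phi_system F G (alpha / (1 + f)) beta (fst d) (snd d) /\
  0 < fst d < 1 /\ snd d < 0.

Definition sol_case2 F G (f alpha beta : R) (d : R * R) : Prop :=
  phi_system F G (alpha * (1 + f)) beta (fst d) (snd d) /\
  fst d < 0 /\ 0 < snd d < 1.

Definition phi (F : R -> R -> R) (G : R -> R) (f alpha beta : R) : R * R :=
  if Rlt_dec (G beta / alpha) (1 / (1 + f)) then
    epsilon (inhabits (0, 0)) (sol_case1 F G f alpha beta)
  else if Rlt_dec (1 + f) (G beta / alpha) then
    epsilon (inhabits (0, 0)) (sol_case2 F G f alpha beta)
  else (0, 0).

Definition phiA F G f alpha beta : R := fst (phi F G f alpha beta).
Definition phiB F G f alpha beta : R := snd (phi F G f alpha beta).

Definition outside_band (G : R -> R) (f alpha beta : R) : Prop :=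
  G beta / alpha < 1 / (1 + f) \/ 1 + f < G beta / alpha.

Definition indic_neg (x : R) : R := if Rlt_dec x 0 then 1 else 0.

Definition objective (f a b DA DB : R) : R :=
  a * (1 + f * indic_neg DA) * DA + b * (1 + f * indic_neg DB) * DB.

Definition feasible (F : R -> R -> R) (yA yB DA DB : R) : Prop :=
  F yA yB = F (yA - DA) (yB - DB) /\ 0 < yA - DA /\ 0 < yB - DB.

From Stdlib Require Import Reals ClassicalEpsilon Lra.
From Coquelicot Require Import Coquelicot.
Open Scope R_scope.

(* Normalise the pool to (beta, 1).  Along every ray from the origin F is
   strictly increasing, so each ray of slope r meets the level curve through
   (beta, 1) exactly once; the solutions of the systems in (i) are the moves
   to that point for r = G^-1(alpha/(1+f)) resp. G^-1(alpha(1+f)), and phi is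
   the move to the ratio obtained by clamping beta between these two values.
   Continuity and monotonicity of phi follow from those of G^-1, of the clamp
   and of the intersection point (the latter in beta by homotheticity).

   For (ii), the objective is bounded by p D^A + q D^B for every (p, q) in
   [a, a(1+f)] x [b, b(1+f)], with equality at the phi-trade for a pair whose
   ratio p/q is the marginal rate G at the post-trade pool.  The line of slope
   -p/q through that pool supports its level curve strictly, since along the
   line the derivative of F is F_y (G(x/y) - p/q), which changes sign there;
   hence every other feasible trade is strictly worse. *)

Lemma continuous_locally_pos {T : UniformSpace} (g : T -> R) (x : T) :
  continuous g x -> 0 < g x -> locally x (fun p => 0 < g p).
Proof.
  intros Hc Hg. apply Hc. exists (mkposreal (g x) Hg). intros y Hy.
  change (Rabs (y - g x) < g x) in Hy. apply Rabs_lt_between in Hy. lra.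
Qed.

Lemma locally_quadrant (a b : R) : 0 < a -> 0 < b ->
  locally (a, b) (fun p : R * R => 0 < fst p /\ 0 < snd p).
Proof.
  intros Ha Hb. apply filter_and.
  - exact (continuous_locally_pos fst (a, b) (continuous_fst a b) Ha).
  - exact (continuous_locally_pos snd (a, b) (continuous_snd a b) Hb).
Qed.

Lemma continuous_Rmin {T : UniformSpace} (g h : T -> R) (x : T) :
  continuous g x -> continuous h x -> continuous (fun y => Rmin (g y) (h y)) x.
Proof.
  intros Hg Hh. apply (continuous_ext (fun y => (g y + h y - Rabs (g y - h y)) * / 2)).
  { intros y. unfold Rmin. destruct (Rle_dec (g y) (h y));
      [rewrite Rabs_left1 | rewrite Rabs_right]; lra. }
  apply (continuous_mult _ (fun _ => / 2)); [|apply continuous_const].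
  apply (continuous_minus (fun y => g y + h y)); [apply (continuous_plus g h); auto|].
  apply (continuous_comp (fun y => g y - h y) Rabs); [apply (continuous_minus g h); auto|].
  apply continuous_Rabs.
Qed.

Lemma continuous_Rmax {T : UniformSpace} (g h : T -> R) (x : T) :
  continuous g x -> continuous h x -> continuous (fun y => Rmax (g y) (h y)) x.
Proof.
  intros Hg Hh. apply (continuous_ext (fun y => - Rmin (- g y) (- h y))).
  { intros y. unfold Rmin, Rmax.
    destruct (Rle_dec (- g y) (- h y)), (Rle_dec (g y) (h y)); lra. }
  apply (continuous_opp (fun y => Rmin (- g y) (- h y))).
  apply (continuous_Rmin (fun y => - g y) (fun y => - h y));
    [apply (continuous_opp g) | apply (continuous_opp h)]; assumption.
Qed.

Lemma Rdiv_lt_cross (u u' y y' : R) : 0 < u -> u < u' -> 0 < y' -> y' < y -> u / y < u' / y'.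
Proof.
  intros Hu Hu' Hy' Hy. apply Rlt_trans with (u' / y).
  - apply Rmult_lt_compat_r; [apply Rinv_0_lt_compat|]; lra.
  - apply Rmult_lt_compat_l; [lra|]. apply Rinv_lt_contravar; nra.
Qed.

Lemma derive_sign_strict_max (g dg : R -> R) (lo hi m : R) : lo < m < hi ->
  (forall u, lo < u < hi -> derivable_pt_lim g u (dg u)) ->
  (forall u, lo < u < m -> 0 < dg u) -> (forall u, m < u < hi -> dg u < 0) ->
  forall u, lo < u < hi -> u <> m -> g u < g m.
Proof.
  intros Hm Hd Hpos Hneg u Hu Hne. destruct (Rlt_or_le u m) as [Hlt | Hge].
  - destruct (MVT_cor2 g dg u m Hlt) as [c [Hc Hcin]]; [intros; apply Hd; lra|].
    specialize (Hpos c ltac:(lra)). nra.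
  - destruct (MVT_cor2 g dg m u) as [c [Hc Hcin]]; [lra | intros; apply Hd; lra |].
    specialize (Hneg c ltac:(lra)). nra.
Qed.

Section LevelCurve.

Variable F : R -> R -> R.
Hypothesis F_incr_x : forall x x' y, 0 < x -> x < x' -> 0 < y -> F x y < F x' y.
Hypothesis F_incr_y : forall x y y', 0 < x -> 0 < y -> y < y' -> F x y < F x y'.
Hypothesis F_cont : forall x y, 0 < x -> 0 < y ->
  continuous (fun p : R * R => F (fst p) (snd p)) (x, y).

Lemma F_le_mono x y x' y' : 0 < x -> 0 < y -> x <= x' -> y <= y' -> F x y <= F x' y'.
Proof.
  intros Hx Hy Hxx Hyy. apply Rle_trans with (F x' y).
  - destruct (Req_dec x x'); [subst; lra | left; apply F_incr_x; lra].
  - destruct (Req_dec y y'); [subst; lra | left; apply F_incr_y; lra].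
Qed.

Lemma F_x_lt_reflect x x' y : 0 < x -> 0 < x' -> 0 < y -> F x y < F x' y -> x < x'.
Proof.
  intros Hx Hx' Hy H. destruct (Rlt_or_le x x') as [|Hle]; auto.
  pose proof (F_le_mono x' y x y Hx' Hy Hle (Rle_refl y)). lra.
Qed.

Lemma ray_strict_mono r c c' : 0 < r -> 0 < c -> c < c' -> F (c * r) c < F (c' * r) c'.
Proof.
  intros Hr Hc Hcc. apply Rlt_le_trans with (F (c' * r) c).
  - apply F_incr_x; nra.
  - apply F_le_mono; nra.
Qed.

Lemma ray_lt_reflect r c c' : 0 < r -> 0 < c -> 0 < c' ->
  F (c * r) c < F (c' * r) c' -> c < c'.
Proof.
  intros Hr Hc Hc' H. destruct (Rlt_or_le c c') as [|[Hlt | ->]]; auto.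
  - pose proof (ray_strict_mono r c' c Hr Hc' Hlt). lra.
  - lra.
Qed.

Lemma ray_eq_reflect r c c' : 0 < r -> 0 < c -> 0 < c' ->
  F (c * r) c = F (c' * r) c' -> c = c'.
Proof.
  intros Hr Hc Hc' H. destruct (Rtotal_order c c') as [Hlt | [Heq | Hgt]]; auto.
  - pose proof (ray_strict_mono r c c' Hr Hc Hlt). lra.
  - pose proof (ray_strict_mono r c' c Hr Hc' Hgt). lra.
Qed.

Definition level_scale (r b : R) : R :=
  epsilon (inhabits 1) (fun c => 0 < c /\ F (c * r) c = F b 1).

Lemma level_scale_spec r b : 0 < r -> 0 < b ->
  0 < level_scale r b /\ F (level_scale r b * r) (level_scale r b) = F b 1.
Proof.
  intros Hr Hb. unfold level_scale. apply epsilon_spec.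
  set (t := b / r).
  assert (Ht : t * r = b) by (unfold t; field; lra).
  assert (Htp : 0 < t) by (apply Rdiv_lt_0_compat; lra).
  set (lo := Rmin t 1 / 2). set (hi := 2 * Rmax t 1).
  pose proof (Rmin_l t 1). pose proof (Rmin_r t 1).
  pose proof (Rmax_l t 1). pose proof (Rmax_r t 1).
  assert (Hlo : 0 < lo) by (pose proof (Rmin_pos t 1 Htp Rlt_0_1); unfold lo; lra).
  assert (Elo : F (lo * r) lo < F b 1).
  { apply Rlt_le_trans with (F (t * r) lo); [apply F_incr_x; unfold lo in *; nra|].
    rewrite Ht. apply F_le_mono; unfold lo in *; lra. }
  assert (Ehi : F b 1 < F (hi * r) hi).
  { apply Rlt_le_trans with (F (hi * r) 1); [rewrite <- Ht; apply F_incr_x; unfold hi in *; nra|].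
    apply F_le_mono; unfold hi in *; nra. }
  destruct (Ranalysis5.IVT_interv (fun c => F (c * r) c - F b 1) lo hi) as [c [Hc Hce]].
  - intros c Hc. apply continuity_pt_minus; [|apply continuity_pt_const; intros ? ?; reflexivity].
    apply continuity_pt_filterlim.
    apply (continuous_comp_2 (fun c => c * r) (fun c => c) F).
    + apply (continuous_mult (fun c : R => c) (fun _ => r));
        [apply continuous_id | apply continuous_const].
    + apply continuous_id.
    + apply F_cont; nra.
  - unfold lo, hi in *; lra.
  - lra.
  - lra.
  - exists c. split; lra.
Qed.

Lemma level_scale_unique r b c : 0 < r -> 0 < b -> 0 < c ->
  F (c * r) c = F b 1 -> level_scale r b = c.
Proof.
  intros Hr Hb Hc H. destruct (level_scale_spec r b Hr Hb) as [Hs Hse].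
  apply (ray_eq_reflect r); auto. congruence.
Qed.

Lemma level_scale_diag b : 0 < b -> level_scale b b = 1.
Proof. intros Hb. apply level_scale_unique; try lra. now rewrite Rmult_1_l. Qed.

Lemma level_scale_below r b : 0 < r -> r < b -> 1 < level_scale r b /\ level_scale r b * r < b.
Proof.
  intros Hr Hrb. destruct (level_scale_spec r b Hr ltac:(lra)) as [Hc Hce].
  set (c := level_scale r b) in *.
  assert (H1 : 1 < c).
  { apply (ray_lt_reflect r); try lra. rewrite Hce, Rmult_1_l. apply F_incr_x; lra. }
  split; auto. apply (F_x_lt_reflect _ _ 1); try nra.
  apply Rlt_le_trans with (F (c * r) c); [apply F_incr_y; nra | lra].
Qed.

Lemma level_scale_above r b : 0 < b -> b < r -> level_scale r b < 1 /\ b < level_scale r b * r.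
Proof.
  intros Hb Hrb. destruct (level_scale_spec r b ltac:(lra) Hb) as [Hc Hce].
  set (c := level_scale r b) in *.
  assert (H1 : c < 1).
  { apply (ray_lt_reflect r); try lra. rewrite Hce, Rmult_1_l. apply F_incr_x; lra. }
  split; auto. apply (F_x_lt_reflect _ _ 1); try nra.
  apply Rle_lt_trans with (F (c * r) c); [lra | apply F_incr_y; nra].
Qed.

Lemma level_scale_mono_r r1 r2 b : 0 < r1 -> r1 < r2 -> 0 < b ->
  level_scale r2 b < level_scale r1 b /\ level_scale r1 b * r1 < level_scale r2 b * r2.
Proof.
  intros H1 H12 Hb.
  destruct (level_scale_spec r1 b H1 Hb) as [Hc1 Hce1].
  destruct (level_scale_spec r2 b ltac:(lra) Hb) as [Hc2 Hce2].
  set (c1 := level_scale r1 b) in *. set (c2 := level_scale r2 b) in *.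
  assert (Hlt : c2 < c1).
  { apply (ray_lt_reflect r1); auto. rewrite Hce1.
    rewrite <- Hce2. apply F_incr_x; nra. }
  split; auto. apply (F_x_lt_reflect _ _ c2); try nra.
  apply Rlt_le_trans with (F (c1 * r1) c1); [apply F_incr_y; nra | lra].
Qed.

Lemma ray_gap_cont c r0 b0 : 0 < c -> 0 < r0 -> 0 < b0 ->
  continuous (fun p : R * R => F (c * fst p) c - F (snd p) 1) (r0, b0).
Proof.
  intros Hc Hr0 Hb0. apply (continuous_minus (fun p : R * R => F (c * fst p) c)).
  - apply (continuous_comp_2 (fun p : R * R => c * fst p) (fun _ => c) F).
    + apply (continuous_mult (fun _ => c)); [apply continuous_const | apply continuous_fst].
    + apply continuous_const.
    + apply F_cont; simpl; nra.
  - apply (continuous_comp_2 (fun p : R * R => snd p) (fun _ => 1) F).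
    + apply continuous_snd.
    + apply continuous_const.
    + apply F_cont; simpl; lra.
Qed.

Lemma level_scale_cont r0 b0 : 0 < r0 -> 0 < b0 ->
  continuous (fun p : R * R => level_scale (fst p) (snd p)) (r0, b0).
Proof.
  intros Hr0 Hb0. apply filterlim_locally. intros eps.
  destruct (level_scale_spec r0 b0 Hr0 Hb0) as [Hc0 Hce0]. simpl fst; simpl snd.
  set (c0 := level_scale r0 b0) in *.
  set (e := Rmin eps (c0 / 2)).
  assert (He : 0 < e) by (apply Rmin_pos; [apply cond_pos | lra]).
  assert (He1 : e <= eps) by apply Rmin_l.
  assert (He2 : e <= c0 / 2) by apply Rmin_r.
  (* the gap has strict opposite signs at [c0 - e] and [c0 + e]; near [(r0, b0)]
     they persist, which traps [level_scale r b] between the two *)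
  set (gap c (p : R * R) := F (c * fst p) c - F (snd p) 1).
  assert (Hlo : locally (r0, b0) (fun p => 0 < - gap (c0 - e) p)).
  { apply (continuous_locally_pos (fun p => - gap (c0 - e) p)).
    - apply (continuous_opp (gap (c0 - e))). apply ray_gap_cont; lra.
    - unfold gap; simpl. rewrite <- Hce0.
      pose proof (ray_strict_mono r0 (c0 - e) c0 Hr0 ltac:(lra) ltac:(lra)). lra. }
  assert (Hhi : locally (r0, b0) (fun p => 0 < gap (c0 + e) p)).
  { apply continuous_locally_pos; [apply ray_gap_cont; lra|].
    unfold gap; simpl. rewrite <- Hce0.
    pose proof (ray_strict_mono r0 c0 (c0 + e) Hr0 Hc0 ltac:(lra)). lra. }
  generalize (filter_and _ _ Hlo (filter_and _ _ Hhi (locally_quadrant r0 b0 Hr0 Hb0))).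
  apply filter_imp. intros [r b] [Hl [Hh [Hr Hb]]]. unfold gap in Hl, Hh; simpl in *.
  destruct (level_scale_spec r b Hr Hb) as [Hc Hce].
  assert (c0 - e < level_scale r b) by (apply (ray_lt_reflect r); lra).
  assert (level_scale r b < c0 + e) by (apply (ray_lt_reflect r); lra).
  change (Rabs (level_scale r b - c0) < eps). apply Rabs_lt_between. lra.
Qed.

(* The fractions [(dA, dB)] to withdraw from a pool [(b, 1)] so as to move it
   along its level curve to the ratio [r]. *)
Definition level_move (r b : R) : R * R :=
  (1 - level_scale r b * r / b, 1 - level_scale r b).

Lemma level_move_iff r b dA dB : 0 < r -> 0 < b -> 0 < 1 - dB ->
  ((1 - dA) / (1 - dB) = / b * r /\ F (b * (1 - dA)) (1 - dB) = F b 1) <->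
  (dA, dB) = level_move r b.
Proof.
  intros Hr Hb HdB. unfold level_move. split.
  - intros [Hratio Hlevel].
    assert (HA : b * (1 - dA) = (1 - dB) * r).
    { replace (b * (1 - dA)) with (b * ((1 - dA) / (1 - dB)) * (1 - dB)) by (field; lra).
      rewrite Hratio. field. lra. }
    rewrite HA in Hlevel.
    rewrite (level_scale_unique r b (1 - dB) Hr Hb HdB Hlevel).
    f_equal; [|ring]. rewrite <- HA. field. lra.
  - intros Heq. injection Heq as -> ->.
    destruct (level_scale_spec r b Hr Hb) as [Hc Hce].
    split; [field; lra|].
    replace (b * (1 - (1 - level_scale r b * r / b))) with (level_scale r b * r) by (field; lra).
    now replace (1 - (1 - level_scale r b)) with (level_scale r b) by ring.
Qed.

Lemma level_move_diag b : 0 < b -> level_move b b = (0, 0).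
Proof.
  intros Hb. unfold level_move. rewrite level_scale_diag by exact Hb. f_equal; field; lra.
Qed.

Lemma level_move_below r b : 0 < r -> r < b ->
  0 < fst (level_move r b) < 1 /\ snd (level_move r b) < 0.
Proof.
  intros Hr Hrb. destruct (level_scale_below r b Hr Hrb) as [H1 H2]. simpl.
  assert (0 < level_scale r b * r / b < 1).
  { split; [apply Rdiv_lt_0_compat; nra | apply (Rmult_lt_reg_r b); [lra|]].
    replace (level_scale r b * r / b * b) with (level_scale r b * r) by (field; lra). lra. }
  lra.
Qed.

Lemma level_move_above r b : 0 < b -> b < r ->
  fst (level_move r b) < 0 /\ 0 < snd (level_move r b) < 1.
Proof.
  intros Hb Hrb. destruct (level_scale_above r b Hb Hrb) as [H1 H2].
  destruct (level_scale_spec r b ltac:(lra) Hb) as [Hc _]. simpl.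
  assert (1 < level_scale r b * r / b).
  { apply (Rmult_lt_reg_r b); [lra|].
    replace (level_scale r b * r / b * b) with (level_scale r b * r) by (field; lra). lra. }
  lra.
Qed.

Lemma level_move_mono_r r1 r2 b : 0 < r1 -> r1 < r2 -> 0 < b ->
  fst (level_move r2 b) < fst (level_move r1 b) /\ snd (level_move r1 b) < snd (level_move r2 b).
Proof.
  intros H1 H12 Hb. destruct (level_scale_mono_r r1 r2 b H1 H12 Hb) as [Hc Hx]. simpl.
  split; [|lra].
  assert (level_scale r1 b * r1 / b < level_scale r2 b * r2 / b); [|lra].
  apply Rmult_lt_compat_r; [apply Rinv_0_lt_compat|]; lra.
Qed.

Lemma level_move_cont r b : 0 < r -> 0 < b ->
  continuous (fun q : R * R => fst (level_move (fst q) (snd q))) (r, b) /\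
  continuous (fun q : R * R => snd (level_move (fst q) (snd q))) (r, b).
Proof.
  intros Hr Hb. pose proof (level_scale_cont r b Hr Hb) as Hc. unfold level_move; simpl.
  split; apply (continuous_minus (fun _ => 1)); try apply continuous_const; [|exact Hc].
  apply (continuous_mult (fun q : R * R => level_scale (fst q) (snd q) * fst q)).
  - apply (continuous_mult (fun q : R * R => level_scale (fst q) (snd q)) (fun q : R * R => fst q));
      [exact Hc | apply continuous_fst].
  - apply (continuous_comp snd Rinv); [apply continuous_snd|].
    apply (filterlim_Rbar_inv (Finite b)). intros Hb0. injection Hb0. lra.
Qed.

Hypothesis F_homothetic : forall x y x' y', 0 < x -> 0 < y -> 0 < x' -> 0 < y' ->
  F x y = F x' y' -> forall c, 0 < c -> F (c * x) (c * y) = F (c * x') (c * y').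

Lemma level_scale_mono_b r b1 b2 : 0 < r -> 0 < b1 -> b1 < b2 ->
  level_scale r b1 < level_scale r b2 /\ level_scale r b2 / b2 < level_scale r b1 / b1.
Proof.
  intros Hr H1 H12.
  destruct (level_scale_spec r b1 Hr H1) as [Hc1 Hce1].
  destruct (level_scale_spec r b2 Hr ltac:(lra)) as [Hc2 Hce2].
  set (c1 := level_scale r b1) in *. set (c2 := level_scale r b2) in *.
  split.
  - apply (ray_lt_reflect r); auto. rewrite Hce1, Hce2. apply F_incr_x; lra.
  - set (l := b2 / b1).
    assert (Hl : l * b1 = b2) by (unfold l; field; lra).
    assert (Hl1 : 1 < l) by (apply (Rmult_lt_reg_r b1); lra).
    (* scaling the level curve through [(b1, 1)] by [l] gives the one through [(b2, l)] *)
    pose proof (F_homothetic (c1 * r) c1 b1 1 ltac:(nra) Hc1 H1 Rlt_0_1 Hce1 l ltac:(lra)) as E.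
    rewrite Hl, Rmult_1_r, <- Rmult_assoc in E.
    assert (Hc2l : c2 < l * c1).
    { apply (ray_lt_reflect r); try nra. rewrite Hce2, E. apply F_incr_y; lra. }
    apply (Rmult_lt_reg_r b2); [lra|].
    replace (c2 / b2 * b2) with c2 by (field; lra).
    replace (c1 / b1 * b2) with (l * c1) by (rewrite <- Hl; field; lra). lra.
Qed.

Lemma level_move_mono_b r b1 b2 : 0 < r -> 0 < b1 -> b1 < b2 ->
  fst (level_move r b1) < fst (level_move r b2) /\ snd (level_move r b2) < snd (level_move r b1).
Proof.
  intros Hr H1 H12. destruct (level_scale_mono_b r b1 b2 Hr H1 H12) as [Hc Hcb]. simpl.
  split; [|lra].
  assert (level_scale r b2 / b2 * r < level_scale r b1 / b1 * r)
    by (apply Rmult_lt_compat_r; assumption).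
  unfold Rdiv in *. lra.
Qed.

End LevelCurve.

Section Inverse.

Variable G : R -> R.
Hypothesis G_pos : forall z, 0 < z -> 0 < G z.
Hypothesis G_decr : forall z z', 0 < z -> z < z' -> G z' < G z.
Hypothesis G_cont : forall z, 0 < z -> continuity_pt G z.
Hypothesis G_lim_0 : filterlim G (at_right 0) (Rbar_locally p_infty).
Hypothesis G_lim_infty : is_lim G p_infty 0.

Lemma G_lt_reflect z z' : 0 < z -> 0 < z' -> G z < G z' -> z' < z.
Proof.
  intros Hz Hz' H. destruct (Rtotal_order z' z) as [| [-> | Hlt]]; auto; [lra|].
  pose proof (G_decr z z' Hz Hlt). lra.
Qed.

Lemma Ginv_spec v : 0 < v -> 0 < Ginv G v /\ G (Ginv G v) = v.
Proof.
  intros Hv.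
  assert (H0 : exists z0, 0 < z0 /\ v < G z0).
  { destruct (G_lim_0 (fun y => v < y) ltac:(exists v; auto)) as [eps Heps].
    exists (eps / 2). pose proof (cond_pos eps). split; [lra|].
    apply Heps; [|lra]. change (Rabs (eps / 2 - 0) < eps). rewrite Rabs_pos_eq; lra. }
  assert (H1 : exists z1, 0 < z1 /\ G z1 < v).
  { apply is_lim_spec in G_lim_infty. destruct (G_lim_infty (mkposreal v Hv)) as [M HM].
    exists (Rmax M 0 + 1). pose proof (Rmax_l M 0). pose proof (Rmax_r M 0).
    split; [lra|]. assert (HG : Rabs (G (Rmax M 0 + 1) - 0) < v) by (apply HM; lra).
    apply Rabs_lt_between in HG. lra. }
  destruct H0 as [z0 [Hz0 Hv0]], H1 as [z1 [Hz1 Hv1]].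
  assert (Hz01 : z0 < z1) by (apply G_lt_reflect; lra).
  destruct (Ranalysis5.IVT_interv (fun z => v - G z) z0 z1) as [z [Hz Hze]]; try lra.
  - intros z Hz. apply continuity_pt_minus; [apply continuity_pt_const; intros ? ?; reflexivity|].
    apply G_cont. lra.
  - unfold Ginv. apply epsilon_spec. exists z. split; lra.
Qed.

Lemma Ginv_decr v v' : 0 < v -> v < v' -> Ginv G v' < Ginv G v.
Proof.
  intros Hv Hvv. destruct (Ginv_spec v Hv) as [Hz Hze], (Ginv_spec v' ltac:(lra)) as [Hz' Hze'].
  apply G_lt_reflect; lra.
Qed.

Lemma Ginv_cont v0 : 0 < v0 -> continuous (Ginv G) v0.
Proof.
  intros Hv0. apply filterlim_locally. intros eps.
  destruct (Ginv_spec v0 Hv0) as [Hz0 Hze0]. set (z0 := Ginv G v0) in *.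
  set (e := Rmin eps (z0 / 2)).
  assert (He : 0 < e) by (apply Rmin_pos; [apply cond_pos | lra]).
  assert (He1 : e <= eps) by apply Rmin_l.
  assert (He2 : e <= z0 / 2) by apply Rmin_r.
  assert (Hlo : v0 < G (z0 - e)) by (rewrite <- Hze0; apply G_decr; lra).
  assert (Hhi : G (z0 + e) < v0) by (rewrite <- Hze0; apply G_decr; lra).
  assert (Hpos : 0 < G (z0 + e)) by (apply G_pos; lra).
  assert (Hd : 0 < Rmin (G (z0 - e) - v0) (v0 - G (z0 + e))) by (apply Rmin_pos; lra).
  exists (mkposreal _ Hd). intros v Hv.
  change (Rabs (v - v0) < Rmin (G (z0 - e) - v0) (v0 - G (z0 + e))) in Hv.
  pose proof (Rmin_l (G (z0 - e) - v0) (v0 - G (z0 + e))).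
  pose proof (Rmin_r (G (z0 - e) - v0) (v0 - G (z0 + e))).
  apply Rabs_lt_between in Hv.
  destruct (Ginv_spec v ltac:(lra)) as [Hz Hze].
  assert (z0 - e < Ginv G v) by (apply G_lt_reflect; lra).
  assert (Ginv G v < z0 + e) by (apply G_lt_reflect; lra).
  change (Rabs (Ginv G v - z0) < eps). apply Rabs_lt_between. lra.
Qed.

Variable f : R.
Hypothesis f_pos : 0 < f.

(* The pool ratio after the optimal trade: no trade pays while [G] of the
   ratio stays within a factor [1 + f] of [alpha]. *)
Definition target_ratio (alpha beta : R) : R :=
  Rmin (Ginv G (alpha / (1 + f))) (Rmax (Ginv G (alpha * (1 + f))) beta).

Lemma fee_band alpha : 0 < alpha -> 0 < alpha / (1 + f) < alpha * (1 + f).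
Proof.
  intros Ha. split; [apply Rdiv_lt_0_compat; lra|].
  apply Rlt_div_l; [lra|]. nra.
Qed.

Lemma Ginv_fee_band alpha : 0 < alpha ->
  0 < Ginv G (alpha * (1 + f)) < Ginv G (alpha / (1 + f)).
Proof.
  intros Ha. destruct (fee_band alpha Ha) as [H0 H1].
  split; [apply Ginv_spec; lra | apply Ginv_decr; assumption].
Qed.

Lemma target_ratio_pos alpha beta : 0 < alpha -> 0 < beta -> 0 < target_ratio alpha beta.
Proof.
  intros Ha Hb. destruct (Ginv_fee_band alpha Ha). unfold target_ratio.
  pose proof (Rmax_l (Ginv G (alpha * (1 + f))) beta). apply Rmin_pos; lra.
Qed.

Lemma target_ratio_low alpha beta : 0 < alpha -> 0 < beta -> G beta / alpha < 1 / (1 + f) ->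
  Ginv G (alpha / (1 + f)) < beta /\ target_ratio alpha beta = Ginv G (alpha / (1 + f)).
Proof.
  intros Ha Hb H. rewrite Rlt_div_l in H by lra.
  replace (1 / (1 + f) * alpha) with (alpha / (1 + f)) in H by (field; lra).
  destruct (Ginv_fee_band alpha Ha) as [HL HLU].
  destruct (Ginv_spec (alpha / (1 + f)) (proj1 (fee_band alpha Ha))) as [HU HGU].
  assert (HUb : Ginv G (alpha / (1 + f)) < beta) by (apply G_lt_reflect; lra).
  split; auto. unfold target_ratio. rewrite Rmax_right, Rmin_left; lra.
Qed.

Lemma target_ratio_high alpha beta : 0 < alpha -> 0 < beta -> 1 + f < G beta / alpha ->
  beta < Ginv G (alpha * (1 + f)) /\ target_ratio alpha beta = Ginv G (alpha * (1 + f)).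
Proof.
  intros Ha Hb H. rewrite <- Rlt_div_r in H by lra.
  destruct (Ginv_fee_band alpha Ha) as [HL HLU].
  destruct (Ginv_spec (alpha * (1 + f)) ltac:(nra)) as [_ HGL].
  assert (HbL : beta < Ginv G (alpha * (1 + f))) by (apply G_lt_reflect; lra).
  split; auto. unfold target_ratio. rewrite Rmax_left, Rmin_right; lra.
Qed.

Lemma target_ratio_band alpha beta : 0 < alpha -> 0 < beta ->
  1 / (1 + f) <= G beta / alpha <= 1 + f -> target_ratio alpha beta = beta.
Proof.
  intros Ha Hb [H1 H2]. rewrite <- Rle_div_r in H1 by lra. rewrite Rle_div_l in H2 by lra.
  replace (1 / (1 + f) * alpha) with (alpha / (1 + f)) in H1 by (field; lra).
  destruct (Ginv_fee_band alpha Ha) as [HL HLU].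
  destruct (Ginv_spec (alpha / (1 + f)) (proj1 (fee_band alpha Ha))) as [HU HGU].
  destruct (Ginv_spec (alpha * (1 + f)) ltac:(nra)) as [_ HGL].
  assert (beta <= Ginv G (alpha / (1 + f))).
  { destruct (Rle_or_lt beta (Ginv G (alpha / (1 + f)))) as [|Hlt]; auto.
    pose proof (G_decr _ _ HU Hlt). lra. }
  assert (Ginv G (alpha * (1 + f)) <= beta).
  { destruct (Rle_or_lt (Ginv G (alpha * (1 + f))) beta) as [|Hlt]; auto.
    pose proof (G_decr _ _ Hb Hlt). lra. }
  unfold target_ratio. rewrite Rmax_right, Rmin_right; lra.
Qed.

Lemma target_ratio_cont alpha beta : 0 < alpha -> 0 < beta ->
  continuous (fun p : R * R => target_ratio (fst p) (snd p)) (alpha, beta).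
Proof.
  intros Ha Hb. destruct (fee_band alpha Ha) as [H0 H1]. unfold target_ratio.
  apply (continuous_Rmin (fun p : R * R => Ginv G (fst p / (1 + f)))).
  - apply (continuous_comp (fun p : R * R => fst p / (1 + f)) (Ginv G)).
    + apply (continuous_mult (fun p : R * R => fst p));
        [apply continuous_fst | apply continuous_const].
    + apply Ginv_cont. exact H0.
  - apply (continuous_Rmax (fun p : R * R => Ginv G (fst p * (1 + f))));
      [|apply continuous_snd].
    apply (continuous_comp (fun p : R * R => fst p * (1 + f)) (Ginv G)).
    + apply (continuous_mult (fun p : R * R => fst p));
        [apply continuous_fst | apply continuous_const].
    + apply Ginv_cont. simpl. lra.
Qed.

Lemma target_ratio_mono_alpha alpha1 alpha2 beta : 0 < alpha1 -> 0 < beta -> alpha1 < alpha2 ->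
  outside_band G f alpha1 beta -> outside_band G f alpha2 beta ->
  target_ratio alpha2 beta < target_ratio alpha1 beta.
Proof.
  intros H1 Hb H12 [O1 | O1] [O2 | O2].
  - rewrite (proj2 (target_ratio_low _ _ H1 Hb O1)),
      (proj2 (target_ratio_low alpha2 beta ltac:(lra) Hb O2)).
    apply Ginv_decr; [apply fee_band; lra|].
    apply Rmult_lt_compat_r; [apply Rinv_0_lt_compat|]; lra.
  - exfalso.
    assert (G beta / alpha2 < G beta / alpha1).
    { apply Rmult_lt_compat_l; [apply G_pos; lra | apply Rinv_lt_contravar; nra]. }
    assert (1 / (1 + f) < 1) by (apply Rlt_div_l; lra).
    lra.
  - destruct (target_ratio_high _ _ H1 Hb O1) as [HbL ->].
    destruct (target_ratio_low alpha2 beta ltac:(lra) Hb O2) as [HUb ->]. lra.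
  - rewrite (proj2 (target_ratio_high _ _ H1 Hb O1)),
      (proj2 (target_ratio_high alpha2 beta ltac:(lra) Hb O2)).
    apply Ginv_decr; nra.
Qed.

End Inverse.

Lemma maximizer_iff_of_strict (P : R -> R -> Prop) (J : R -> R -> R) (xA xB : R) :
  P xA xB -> (forall EA EB, P EA EB -> (EA <> xA \/ EB <> xB) -> J EA EB < J xA xB) ->
  forall DA DB, (P DA DB /\ forall EA EB, P EA EB -> J EA EB <= J DA DB) <-> (DA = xA /\ DB = xB).
Proof.
  intros Hx Hstrict DA DB. split.
  - intros [HD Hmax].
    destruct (Req_dec DA xA), (Req_dec DB xB); auto;
      specialize (Hmax xA xB Hx); specialize (Hstrict DA DB HD); exfalso; lra.
  - intros [-> ->]. split; auto. intros EA EB HE.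
    destruct (Req_dec EA xA), (Req_dec EB xB); subst; [lra | left; apply Hstrict; auto ..].
Qed.

Lemma objective_le_linear f a b p q DA DB : a <= p <= a * (1 + f) -> b <= q <= b * (1 + f) ->
  objective f a b DA DB <= p * DA + q * DB.
Proof.
  intros Hp Hq. unfold objective, indic_neg.
  destruct (Rlt_dec DA 0), (Rlt_dec DB 0); nra.
Qed.

Lemma objective_eq_linear f a b p q DA DB :
  (0 < DA -> p = a) -> (DA < 0 -> p = a * (1 + f)) ->
  (0 < DB -> q = b) -> (DB < 0 -> q = b * (1 + f)) ->
  objective f a b DA DB = p * DA + q * DB.
Proof.
  intros HpA HpA' HqB HqB'. unfold objective, indic_neg.
  destruct (Rlt_dec DA 0) as [HA | HA], (Rlt_dec DB 0) as [HB | HB].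
  all: destruct (Rtotal_order DA 0) as [HA' | [-> | HA']];
       destruct (Rtotal_order DB 0) as [HB' | [-> | HB']];
       rewrite ?HpA, ?HpA', ?HqB, ?HqB' by lra; try ring; lra.
Qed.

Lemma fee_cone_band f a b g : 0 < f -> 0 < a -> 0 < b -> 0 < g ->
  a / (1 + f) <= g * b <= a * (1 + f) ->
  exists p q, a <= p <= a * (1 + f) /\ b <= q <= b * (1 + f) /\ g = p / q.
Proof.
  intros Hf Ha Hb Hg [H1 H2]. rewrite Rle_div_l in H1 by lra.
  destruct (Rle_or_lt a (g * b)) as [Hab | Hab].
  - exists (g * b), b. split; [lra|]. split; [nra|]. field. lra.
  - exists a, (a / g). split; [nra|]. split; [split|].
    + apply Rle_div_r; lra.
    + apply Rle_div_l; lra.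
    + field. lra.
Qed.

Section SupportingLine.

Variables (F Fx Fy : R -> R -> R) (G : R -> R).
Hypothesis F_incr_x : forall x x' y, 0 < x -> x < x' -> 0 < y -> F x y < F x' y.
Hypothesis F_incr_y : forall x y y', 0 < x -> 0 < y -> y < y' -> F x y < F x y'.
Hypothesis F_diff : forall x y, 0 < x -> 0 < y ->
  differentiable_pt_lim F x y (Fx x y) (Fy x y).
Hypothesis Fy_pos : forall x y, 0 < x -> 0 < y -> 0 < Fy x y.
Hypothesis F_slope : forall x y, 0 < x -> 0 < y -> Fx x y / Fy x y = G (x / y).
Hypothesis G_decr : forall z z', 0 < z -> z < z' -> G z' < G z.

Lemma level_max_on_line xh yh p q : 0 < xh -> 0 < yh -> 0 < p -> 0 < q ->
  G (xh / yh) = p / q ->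
  forall u, 0 < u -> p * u < p * xh + q * yh -> u <> xh ->
  F u ((p * xh + q * yh - p * u) / q) < F xh yh.
Proof.
  intros Hxh Hyh Hp Hq Hslope u Hu Hus Hne.
  set (s := p * xh + q * yh) in *.
  set (yl w := (s - p * w) / q).
  assert (Hyl_xh : yl xh = yh) by (unfold yl, s; field; lra).
  assert (Hdom : forall w, 0 < w < s / p -> 0 < yl w).
  { intros w [Hw Hws]. apply Rdiv_lt_0_compat; [|lra].
    apply Rlt_div_r in Hws; lra. }
  assert (Hyl_decr : forall w w', w < w' -> yl w' < yl w).
  { intros w w' Hww. apply Rmult_lt_compat_r; [apply Rinv_0_lt_compat|]; nra. }
  set (dg w := Fx w (yl w) * 1 + Fy w (yl w) * (- p / q)).
  (* along the line, the slope of [F] has the sign of [G (w / yl w) - p / q] *)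
  assert (Hdg : forall w, 0 < w < s / p ->
            dg w = Fy w (yl w) * (G (w / yl w) - G (xh / yh))).
  { intros w Hw. pose proof (Hdom w Hw). unfold dg.
    rewrite Hslope, <- (F_slope w (yl w)) by lra.
    field. pose proof (Fy_pos w (yl w)). split; lra. }
  assert (Hxs : xh < s / p) by (apply Rlt_div_r; unfold s; nra).
  rewrite <- Hyl_xh.
  apply (derive_sign_strict_max (fun w => F w (yl w)) dg 0 (s / p) xh); auto.
  - intros w Hw. pose proof (Hdom w Hw).
    apply (derivable_pt_lim_comp_2d F (fun w => w) yl w);
      [apply F_diff; lra | apply derivable_pt_lim_id |].
    apply is_derive_Reals. unfold yl. auto_derive; [auto | field; lra].
  - intros w Hw. rewrite Hdg by lra. pose proof (Hdom w ltac:(lra)).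
    apply Rmult_lt_0_compat; [apply Fy_pos; lra|].
    assert (w / yl w < xh / yh)
      by (apply Rdiv_lt_cross; try lra; rewrite <- Hyl_xh; apply Hyl_decr; lra).
    assert (G (xh / yh) < G (w / yl w)); [|lra].
    apply G_decr; auto. apply Rdiv_lt_0_compat; lra.
  - intros w Hw. rewrite Hdg by lra. pose proof (Hdom w ltac:(lra)).
    apply Rmult_pos_neg; [apply Fy_pos; lra|].
    assert (xh / yh < w / yl w)
      by (apply Rdiv_lt_cross; try lra; rewrite <- Hyl_xh; apply Hyl_decr; lra).
    assert (G (w / yl w) < G (xh / yh)); [|lra].
    apply G_decr; auto. apply Rdiv_lt_0_compat; lra.
  - split; [lra|]. apply Rlt_div_r; lra.
Qed.

Lemma level_supporting_line xh yh x y p q :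
  0 < xh -> 0 < yh -> 0 < x -> 0 < y -> 0 < p -> 0 < q ->
  F x y = F xh yh -> (x <> xh \/ y <> yh) -> G (xh / yh) = p / q ->
  p * xh + q * yh < p * x + q * y.
Proof.
  intros Hxh Hyh Hx Hy Hp Hq Hlevel Hne Hslope.
  set (s := p * xh + q * yh). set (w := p * x + q * y).
  destruct (Rlt_or_le s w) as [| Hle]; auto. exfalso.
  (* push [(x, y)] radially out onto the line through [(xh, yh)] *)
  set (t := s / w).
  assert (Hw : 0 < w) by (unfold w; nra).
  assert (Ht : t * w = s) by (unfold t; field; lra).
  assert (Ht1 : 1 <= t) by (apply Rle_div_r; lra).
  assert (Hty : t * y = (s - p * (t * x)) / q) by (field_simplify_eq; unfold w in Ht; nra).
  assert (Hup : F x y <= F (t * x) (t * y)) by (apply F_le_mono; auto; nra).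
  destruct (Req_dec (t * x) xh) as [Hex | Hnex].
  - assert (Hey : t * y = yh) by (rewrite Hty, Hex; unfold s; field; lra).
    destruct (Req_dec t 1) as [-> | Ht1'].
    + rewrite !Rmult_1_l in *. destruct Hne; contradiction.
    + assert (F x y < F (t * x) (t * y)).
      { apply Rlt_le_trans with (F (t * x) y); [apply F_incr_x; nra | apply F_le_mono; auto; nra]. }
      rewrite Hex, Hey in *. lra.
  - assert (F (t * x) (t * y) < F xh yh).
    { assert (0 < t * (q * y)) by (apply Rmult_lt_0_compat; [lra | nra]).
      rewrite Hty. apply (level_max_on_line xh yh p q); auto.
      - apply Rmult_lt_0_compat; lra.
      - fold s. unfold w in Ht. nra. }
    lra.
Qed.

Lemma optimal_of_supporting_price f a b yA yB DA DB p q : 0 < a -> 0 < b ->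
  feasible F yA yB DA DB ->
  a <= p <= a * (1 + f) -> b <= q <= b * (1 + f) ->
  G ((yA - DA) / (yB - DB)) = p / q ->
  objective f a b DA DB = p * DA + q * DB ->
  forall EA EB, feasible F yA yB EA EB -> (EA <> DA \/ EB <> DB) ->
  objective f a b EA EB < objective f a b DA DB.
Proof.
  intros Ha Hb [HlevelD [HxD HyD]] Hp Hq Hslope Hobj EA EB [HlevelE [HxE HyE]] Hne.
  rewrite Hobj.
  apply Rle_lt_trans with (p * EA + q * EB); [apply objective_le_linear; assumption|].
  assert (p * (yA - DA) + q * (yB - DB) < p * (yA - EA) + q * (yB - EB)); [|lra].
  apply level_supporting_line; lra.
Qed.

End SupportingLine.

Section Proposition.

Variables (F : R -> R -> R) (G : R -> R) (f : R).
Hypothesis HP : AssumptionP F G.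
Hypothesis f_pos : 0 < f.

Lemma F_incr_x x x' y : 0 < x -> x < x' -> 0 < y -> F x y < F x' y.
Proof.
  destruct HP as [[Fx [Fy HF]] _]. intros Hx Hxx Hy.
  apply (incr_function (fun u => F u y) 0 p_infty (fun u => Fx u y)); simpl; auto;
    intros u Hu _; now destruct (HF u y Hu Hy) as (? & _ & _ & _ & ? & _).
Qed.

Lemma F_incr_y x y y' : 0 < x -> 0 < y -> y < y' -> F x y < F x y'.
Proof.
  destruct HP as [[Fx [Fy HF]] _]. intros Hx Hy Hyy.
  apply (incr_function (fun v => F x v) 0 p_infty (fun v => Fy x v)); simpl; auto;
    intros v Hv _; now destruct (HF x v Hx Hv) as (_ & ? & _ & _ & _ & ? & _).
Qed.

Lemma F_marginals : exists Fx Fy : R -> R -> R, forall x y, 0 < x -> 0 < y ->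
  differentiable_pt_lim F x y (Fx x y) (Fy x y) /\ 0 < Fy x y /\ Fx x y / Fy x y = G (x / y).
Proof.
  destruct HP as [[Fx [Fy HF]] _]. exists Fx, Fy. intros x y Hx Hy.
  destruct (HF x y Hx Hy) as (_ & Hdy & Hcx & _ & _ & Hpy & Hslope).
  split; [|tauto].
  assert (Hdx : locally (x, y) (fun p : R * R =>
            is_derive (fun u => F u (snd p)) (fst p) (Fx (fst p) (snd p)))).
  { eapply filter_imp; [|exact (locally_quadrant x y Hx Hy)].
    intros [u v] [Hu Hv]. exact (proj1 (HF u v Hu Hv)). }
  apply filterdiff_differentiable_pt_lim.
  apply (filterdiff_ext_lin _ _ _ (is_derive_filterdiff F x y Fx (Fy x y) Hdx Hdy Hcx)).
  intros [u v]. reflexivity.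
Qed.

Lemma F_cont x y : 0 < x -> 0 < y -> continuous (fun p : R * R => F (fst p) (snd p)) (x, y).
Proof.
  destruct F_marginals as [Fx [Fy HF]]. intros Hx Hy.
  apply (@filterdiff_continuous R_AbsRing
           (prod_NormedModule R_AbsRing R_NormedModule R_NormedModule) R_NormedModule).
  exists (fun u : R * R => fst u * Fx x y + snd u * Fy x y).
  apply filterdiff_differentiable_pt_lim, HF; assumption.
Qed.

Lemma F_homothetic x y x' y' : 0 < x -> 0 < y -> 0 < x' -> 0 < y' ->
  F x y = F x' y' -> forall c, 0 < c -> F (c * x) (c * y) = F (c * x') (c * y').
Proof. destruct HP as (_ & _ & _ & _ & Hhom). apply Hhom. Qed.

Lemma G_pos z : 0 < z -> 0 < G z.
Proof. destruct HP as (_ & [G' HG] & _). intros Hz. apply (HG z Hz). Qed.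

Lemma G_cont z : 0 < z -> continuity_pt G z.
Proof.
  destruct HP as (_ & [G' HG] & _). intros Hz.
  apply continuity_pt_filterlim, (ex_derive_continuous G).
  exists (G' z). apply (HG z Hz).
Qed.

Lemma G_decr z z' : 0 < z -> z < z' -> G z' < G z.
Proof.
  destruct HP as (_ & [G' HG] & _). intros Hz Hzz.
  enough (- G z < - G z') by lra.
  apply (incr_function (fun u => - G u) 0 p_infty (fun u => - G' u)); simpl; auto; intros u Hu _.
  - apply (is_derive_opp G). apply (HG u Hu).
  - destruct (HG u Hu) as (_ & _ & _ & ?). lra.
Qed.

Lemma G_lim_0 : filterlim G (at_right 0) (Rbar_locally p_infty).
Proof. apply HP. Qed.

Lemma G_lim_infty : is_lim G p_infty 0.
Proof. apply HP. Qed.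

Local Hint Resolve F_incr_x F_incr_y F_cont F_homothetic : core.
Local Hint Resolve G_pos G_cont G_decr G_lim_0 G_lim_infty : core.

Lemma sol_case1_iff alpha beta d : 0 < alpha -> 0 < beta -> G beta / alpha < 1 / (1 + f) ->
  sol_case1 F G f alpha beta d <-> d = level_move F (Ginv G (alpha / (1 + f))) beta.
Proof.
  intros Ha Hb H.
  destruct (target_ratio_low G) with (f := f) (alpha := alpha) (beta := beta) as [HUb _]; auto.
  destruct (Ginv_fee_band G) with (alpha := alpha) (f := f) as [HL HU]; auto.
  destruct d as [dA dB]. unfold sol_case1, phi_system; simpl.
  split.
  - intros [Hsys [_ HdB]]. apply level_move_iff; auto; lra.
  - intros Hd.
    pose proof (level_move_below F F_incr_x F_incr_y F_cont
                  (Ginv G (alpha / (1 + f))) beta ltac:(lra) HUb) as Hs.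
    rewrite <- Hd in Hs. simpl in Hs. split; [|lra].
    apply level_move_iff; auto; lra.
Qed.

Lemma sol_case2_iff alpha beta d : 0 < alpha -> 0 < beta -> 1 + f < G beta / alpha ->
  sol_case2 F G f alpha beta d <-> d = level_move F (Ginv G (alpha * (1 + f))) beta.
Proof.
  intros Ha Hb H.
  destruct (target_ratio_high G) with (f := f) (alpha := alpha) (beta := beta) as [HbL _]; auto.
  destruct (Ginv_fee_band G) with (alpha := alpha) (f := f) as [HL HU]; auto.
  destruct d as [dA dB]. unfold sol_case2, phi_system; simpl.
  split.
  - intros [Hsys [_ HdB]]. apply level_move_iff; auto; lra.
  - intros Hd. pose proof (level_move_above F F_incr_x F_incr_y F_cont _ _ Hb HbL) as Hs.
    rewrite <- Hd in Hs. simpl in Hs. split; [|lra].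
    apply level_move_iff; auto; lra.
Qed.

Lemma phi_eq alpha beta : 0 < alpha -> 0 < beta ->
  phi F G f alpha beta = level_move F (target_ratio G f alpha beta) beta.
Proof.
  intros Ha Hb. unfold phi.
  destruct (Rlt_dec (G beta / alpha) (1 / (1 + f))) as [H1 | H1];
    [|destruct (Rlt_dec (1 + f) (G beta / alpha)) as [H2 | H2]].
  - destruct (target_ratio_low G) with (f := f) (alpha := alpha) (beta := beta) as [_ ->]; auto.
    apply sol_case1_iff, epsilon_spec; auto.
    eexists. apply sol_case1_iff; auto.
  - destruct (target_ratio_high G) with (f := f) (alpha := alpha) (beta := beta) as [_ ->]; auto.
    apply sol_case2_iff, epsilon_spec; auto.
    eexists. apply sol_case2_iff; auto.
  - rewrite target_ratio_band, level_move_diag; auto. lra.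
Qed.

Lemma phi_cont alpha beta : 0 < alpha -> 0 < beta ->
  continuous (fun p : R * R => phiA F G f (fst p) (snd p)) (alpha, beta) /\
  continuous (fun p : R * R => phiB F G f (fst p) (snd p)) (alpha, beta).
Proof.
  intros Ha Hb.
  set (r p := target_ratio G f (fst p) (snd p)).
  assert (Hr : continuous r (alpha, beta)) by (apply target_ratio_cont; auto).
  assert (Hrpos : 0 < r (alpha, beta)) by (apply target_ratio_pos; auto).
  assert (Hphi : locally (alpha, beta)
                  (fun p => phi F G f (fst p) (snd p) = level_move F (r p) (snd p))).
  { eapply filter_imp; [|exact (locally_quadrant alpha beta Ha Hb)].
    intros p [Hp1 Hp2]. now apply phi_eq. }
  destruct (level_move_cont F F_incr_x F_incr_y F_cont _ _ Hrpos Hb) as [HcA HcB].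
  split.
  - apply (continuous_ext_loc _ (fun p => fst (level_move F (r p) (snd p)))).
    + eapply filter_imp; [|exact Hphi]. intros p Hp. unfold phiA. f_equal. symmetry. exact Hp.
    + exact (continuous_comp_2 r snd (fun x y => fst (level_move F x y)) _
               Hr (continuous_snd _ _) HcA).
  - apply (continuous_ext_loc _ (fun p => snd (level_move F (r p) (snd p)))).
    + eapply filter_imp; [|exact Hphi]. intros p Hp. unfold phiB. f_equal. symmetry. exact Hp.
    + exact (continuous_comp_2 r snd (fun x y => snd (level_move F x y)) _
               Hr (continuous_snd _ _) HcB).
Qed.

Lemma phi_band alpha beta : 0 < alpha -> 0 < beta -> 1 / (1 + f) <= G beta / alpha <= 1 + f ->
  phiA F G f alpha beta = 0 /\ phiB F G f alpha beta = 0.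
Proof.
  intros Ha Hb Hband. unfold phiA, phiB.
  rewrite phi_eq, target_ratio_band, level_move_diag; auto.
Qed.

Lemma phi_mono_alpha alpha1 alpha2 beta : 0 < alpha1 -> 0 < beta -> alpha1 < alpha2 ->
  outside_band G f alpha1 beta -> outside_band G f alpha2 beta ->
  phiA F G f alpha1 beta < phiA F G f alpha2 beta /\
  phiB F G f alpha2 beta < phiB F G f alpha1 beta.
Proof.
  intros H1 Hb H12 O1 O2. unfold phiA, phiB. rewrite !phi_eq by lra.
  apply level_move_mono_r; auto.
  - apply target_ratio_pos; auto; lra.
  - apply target_ratio_mono_alpha; auto.
Qed.

Lemma phi_mono_beta alpha beta1 beta2 : 0 < alpha -> 0 < beta1 -> beta1 < beta2 ->
  outside_band G f alpha beta1 -> outside_band G f alpha beta2 ->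
  phiA F G f alpha beta1 < phiA F G f alpha beta2 /\
  phiB F G f alpha beta2 < phiB F G f alpha beta1.
Proof.
  intros Ha H1 H12 O1 O2. assert (H2 : 0 < beta2) by lra.
  unfold phiA, phiB. rewrite !phi_eq by lra.
  destruct (Ginv_fee_band G) with (alpha := alpha) (f := f) as [HL HU]; auto.
  assert (Hq : G beta2 / alpha < G beta1 / alpha).
  { apply Rmult_lt_compat_r; [apply Rinv_0_lt_compat; lra | auto]. }
  destruct O1 as [O1 | O1].
  - destruct (target_ratio_low G) with (f := f) (alpha := alpha) (beta := beta1) as [_ ->]; auto.
    destruct (target_ratio_low G) with (f := f) (alpha := alpha) (beta := beta2) as [_ ->];
      auto; try lra.
    apply level_move_mono_b; auto; lra.
  - destruct (target_ratio_high G) with (f := f) (alpha := alpha) (beta := beta1) as [HbL ->]; auto.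
    destruct O2 as [O2 | O2].
    + (* the trade direction flips between [beta1] and [beta2] *)
      destruct (target_ratio_low G) with (f := f) (alpha := alpha) (beta := beta2) as [HUb ->];
        auto.
      pose proof (level_move_above F F_incr_x F_incr_y F_cont _ beta1 H1 HbL).
      pose proof (level_move_below F F_incr_x F_incr_y F_cont
                    (Ginv G (alpha / (1 + f))) beta2 ltac:(lra) HUb).
      lra.
    + destruct (target_ratio_high G) with (f := f) (alpha := alpha) (beta := beta2) as [_ ->]; auto.
      apply level_move_mono_b; auto.
Qed.

Lemma phi_trade_post yA yB a b : 0 < yA -> 0 < yB -> 0 < a -> 0 < b ->
  let r := target_ratio G f (a / b) (yA / yB) in
  let c := level_scale F r (yA / yB) in
  yA - phiA F G f (a / b) (yA / yB) * yA = yB * (c * r) /\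
  yB - phiB F G f (a / b) (yA / yB) * yB = yB * c.
Proof.
  intros HyA HyB Ha Hb r c. unfold phiA, phiB.
  rewrite phi_eq by (apply Rdiv_lt_0_compat; lra). unfold level_move; simpl. fold r c.
  split; [field; lra | ring].
Qed.

Lemma phi_trade_feasible yA yB a b : 0 < yA -> 0 < yB -> 0 < a -> 0 < b ->
  feasible F yA yB (phiA F G f (a / b) (yA / yB) * yA) (phiB F G f (a / b) (yA / yB) * yB).
Proof.
  intros HyA HyB Ha Hb.
  assert (Hbeta : 0 < yA / yB) by (apply Rdiv_lt_0_compat; lra).
  assert (Hr : 0 < target_ratio G f (a / b) (yA / yB))
    by (apply target_ratio_pos; auto; apply Rdiv_lt_0_compat; lra).
  destruct (phi_trade_post yA yB a b HyA HyB Ha Hb) as [HxA HxB]. simpl in HxA, HxB.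
  set (r := target_ratio G f (a / b) (yA / yB)) in *.
  destruct (level_scale_spec F F_incr_x F_incr_y F_cont r _ Hr Hbeta) as [Hc Hce].
  set (c := level_scale F r (yA / yB)) in *.
  unfold feasible. rewrite HxA, HxB. split; [|split; apply Rmult_lt_0_compat; nra].
  (* the level curve through [(yA / yB, 1)], scaled by [yB] *)
  rewrite (F_homothetic (c * r) c (yA / yB) 1 ltac:(nra) Hc Hbeta Rlt_0_1 Hce yB HyB).
  f_equal; field; lra.
Qed.

Lemma phi_trade_ratio yA yB a b : 0 < yA -> 0 < yB -> 0 < a -> 0 < b ->
  (yA - phiA F G f (a / b) (yA / yB) * yA) / (yB - phiB F G f (a / b) (yA / yB) * yB) =
  target_ratio G f (a / b) (yA / yB).
Proof.
  intros HyA HyB Ha Hb.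
  assert (Hbeta : 0 < yA / yB) by (apply Rdiv_lt_0_compat; lra).
  assert (Hr : 0 < target_ratio G f (a / b) (yA / yB))
    by (apply target_ratio_pos; auto; apply Rdiv_lt_0_compat; lra).
  destruct (level_scale_spec F F_incr_x F_incr_y F_cont _ _ Hr Hbeta) as [Hc _].
  destruct (phi_trade_post yA yB a b HyA HyB Ha Hb) as [-> ->]. field. lra.
Qed.

Lemma phi_trade_price yA yB a b : 0 < yA -> 0 < yB -> 0 < a -> 0 < b ->
  let DA := phiA F G f (a / b) (yA / yB) * yA in
  let DB := phiB F G f (a / b) (yA / yB) * yB in
  exists p q, a <= p <= a * (1 + f) /\ b <= q <= b * (1 + f) /\
    G (target_ratio G f (a / b) (yA / yB)) = p / q /\
    objective f a b DA DB = p * DA + q * DB.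
Proof.
  intros HyA HyB Ha Hb DA DB.
  set (alpha := a / b) in *. set (beta := yA / yB) in *.
  assert (Hal : 0 < alpha) by (apply Rdiv_lt_0_compat; lra).
  assert (Hbe : 0 < beta) by (apply Rdiv_lt_0_compat; lra).
  unfold DA, DB, phiA, phiB. rewrite phi_eq by assumption.
  destruct (Rlt_dec (G beta / alpha) (1 / (1 + f))) as [H1 | H1];
    [|destruct (Rlt_dec (1 + f) (G beta / alpha)) as [H2 | H2]].
  - destruct (target_ratio_low G) with (f := f) (alpha := alpha) (beta := beta) as [HUb ->]; auto.
    destruct (Ginv_spec G) with (v := alpha / (1 + f)) as [HU HGU]; auto; [apply fee_band; lra|].
    destruct (level_move_below F F_incr_x F_incr_y F_cont _ beta HU HUb) as [HA HB].
    exists a, (b * (1 + f)). split; [split; nra|]. split; [split; nra|]. split.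
    + rewrite HGU. unfold alpha. field. lra.
    + apply objective_eq_linear; intros; nra.
  - destruct (target_ratio_high G) with (f := f) (alpha := alpha) (beta := beta) as [HbL ->]; auto.
    destruct (Ginv_spec G) with (v := alpha * (1 + f)) as [HL HGL]; auto; [nra|].
    destruct (level_move_above F F_incr_x F_incr_y F_cont _ beta Hbe HbL) as [HA HB].
    exists (a * (1 + f)), b. split; [split; nra|]. split; [split; nra|]. split.
    + rewrite HGL. unfold alpha. field. lra.
    + apply objective_eq_linear; intros; nra.
  - rewrite target_ratio_band, level_move_diag by (auto; lra). simpl.
    assert (Hk : G beta * b = G beta / alpha * a) by (unfold alpha; field; split; lra).
    destruct (fee_cone_band f a b (G beta)) as (p & q & Hp & Hq & Hg); auto.
    { rewrite Hk, (Rmult_comm a (1 + f)).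
      replace (a / (1 + f)) with (1 / (1 + f) * a) by (field; lra).
      split; apply Rmult_le_compat_r; lra. }
    exists p, q. split; [assumption|]. split; [assumption|]. split; [assumption|].
    apply objective_eq_linear; intros; lra.
Qed.

Lemma phi_trade_optimal yA yB a b : 0 < yA -> 0 < yB -> 0 < a -> 0 < b ->
  let DA := phiA F G f (a / b) (yA / yB) * yA in
  let DB := phiB F G f (a / b) (yA / yB) * yB in
  forall EA EB, feasible F yA yB EA EB -> (EA <> DA \/ EB <> DB) ->
    objective f a b EA EB < objective f a b DA DB.
Proof.
  intros HyA HyB Ha Hb DA DB.
  destruct F_marginals as [Fx [Fy HF]].
  destruct (phi_trade_price yA yB a b HyA HyB Ha Hb) as (p & q & Hp & Hq & Hslope & Hobj).
  apply (optimal_of_supporting_price F Fx Fy G) with p q; auto;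
    try (intros x y Hx Hy; apply HF; assumption).
  - apply phi_trade_feasible; assumption.
  - unfold DA, DB. rewrite phi_trade_ratio; assumption.
Qed.

End Proposition.

Theorem proposition3p1 (F : R -> R -> R) (G : R -> R) (f : R) :
  AssumptionP F G -> 0 < f ->
  ((forall alpha beta, 0 < alpha -> 0 < beta ->
      G beta / alpha < 1 / (1 + f) ->
      exists d, sol_case1 F G f alpha beta d /\
        forall d', sol_case1 F G f alpha beta d' -> d' = d) /\
   (forall alpha beta, 0 < alpha -> 0 < beta ->
      1 + f < G beta / alpha ->
      exists d, sol_case2 F G f alpha beta d /\
        forall d', sol_case2 F G f alpha beta d' -> d' = d) /\
   (forall alpha beta, 0 < alpha -> 0 < beta ->
      continuous (fun p : R * R => phiA F G f (fst p) (snd p)) (alpha, beta) /\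
      continuous (fun p : R * R => phiB F G f (fst p) (snd p)) (alpha, beta)) /\
   (forall alpha beta, 0 < alpha -> 0 < beta ->
      1 / (1 + f) <= G beta / alpha <= 1 + f ->
      phiA F G f alpha beta = 0 /\ phiB F G f alpha beta = 0) /\
   (forall alpha1 alpha2 beta, 0 < alpha1 -> 0 < beta -> alpha1 < alpha2 ->
      outside_band G f alpha1 beta -> outside_band G f alpha2 beta ->
      phiA F G f alpha1 beta < phiA F G f alpha2 beta /\
      phiB F G f alpha2 beta < phiB F G f alpha1 beta) /\
   (forall alpha beta1 beta2, 0 < alpha -> 0 < beta1 -> beta1 < beta2 ->
      outside_band G f alpha beta1 -> outside_band G f alpha beta2 ->
      phiA F G f alpha beta1 < phiA F G f alpha beta2 /\
      phiB F G f alpha beta2 < phiB F G f alpha beta1)) /\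
  (forall yA yB a b, 0 < yA -> 0 < yB -> 0 < a -> 0 < b ->
     forall DA DB,
       (feasible F yA yB DA DB /\
        forall EA EB, feasible F yA yB EA EB ->
          objective f a b EA EB <= objective f a b DA DB)
       <->
       (DA = phiA F G f (a / b) (yA / yB) * yA /\
        DB = phiB F G f (a / b) (yA / yB) * yB)).
Proof.
  intros HP Hf.
  refine (conj (conj _ (conj _ (conj _ (conj _ (conj _ _))))) _).
  - intros alpha beta Ha Hb H. eexists. split.
    + apply sol_case1_iff; auto.
    + intros d'. apply sol_case1_iff; auto.
  - intros alpha beta Ha Hb H. eexists. split.
    + apply sol_case2_iff; auto.
    + intros d'. apply sol_case2_iff; auto.
  - intros alpha beta Ha Hb. apply phi_cont; auto.
  - intros alpha beta Ha Hb Hband. apply phi_band; auto.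
  - intros alpha1 alpha2 beta H1 Hb H12 O1 O2. apply phi_mono_alpha; auto.
  - intros alpha beta1 beta2 Ha H1 H12 O1 O2. apply phi_mono_beta; auto.
  - intros yA yB a b HyA HyB Ha Hb. apply maximizer_iff_of_strict.
    + apply phi_trade_feasible; auto.
    + apply phi_trade_optimal; auto.
Qed.
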